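(* Let $q$ be a prime power and $f\in\mathbb{F}_q[x]$ monic of degree $m$, and put $M(x)=x^mf(x+x^{-1})$. Suppose $M(x)=(x-1)^2g_1(x)\cdots g_{r-1}(x)$ where the $g_i$ are pairwise different monic irreducible polynomials, none equal to $x\pm1$. Let $M_t(x)=M(x)+tx^m\in\mathbb{F}_q(t)[x]$ with Galois group $H$ over $\mathbb{F}_q(t)$, let its roots be arranged in pairs $\{\alpha_i,\alpha_i^{-1}\}$, $1\le i\le m$, and let $N$ be the kernel of the action of $H$ on these pairs. Then $H/N$ (and hence any subgroup $H_0\le H$ with $H_0\cong H/N$, $H_0\cap N=1$) is isomorphic to the Galois group of $f(x)+t$ over $\mathbb{F}_q(t)$. *)

From HB Require Import structures.
From mathcomp Require Import all_boot all_order all_algebra all_fingroup all_field.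
Set Implicit Arguments. Unset Strict Implicit. Unset Printing Implicit Defensive.
Import GRing.Theory.
Local Open Scope ring_scope.

Notation ratfun F := {fraction {poly F}}.

Definition cst (F : fieldType) (c : F) : ratfun F := @FracField.tofrac {poly F} c%:P.

Definition tvar (F : fieldType) : ratfun F := @FracField.tofrac {poly F} 'X.

(* M(x) = x^m f(x + x^{-1}), m = deg f, written out as a polynomial:
   x^m f(x + 1/x) = sum_i f_i x^(m-i) (x^2+1)^i. *)
Definition Mpoly (F : fieldType) (f : {poly F}) : {poly F} :=
  \sum_(i < size f) f`_i *: ('X^((size f).-1 - i) * ('X^2 + 1) ^+ i).

Definition Mtpoly (F : fieldType) (f : {poly F}) : {poly ratfun F} :=
  map_poly (@cst F) (Mpoly f) + tvar F *: 'X^((size f).-1).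

Definition fplust (F : fieldType) (f : {poly F}) : {poly ratfun F} :=
  map_poly (@cst F) f + (tvar F)%:P.

(* Kernel of the action of H = Gal(L / F(t)) on the pairs {a, a^-1} of roots,
   rs being the list of roots of M_t in its splitting field L. *)
Definition pair_kernel (K : fieldType) (L : splittingFieldType K) (rs : seq L)
  : {set gal_of {:L}} :=
  [set s in ('Gal({:L} / 1%AS))%g | all (fun a => (s a == a) || (s a == a^-1)) rs].

(* Put h := f + t, so that M_t(x) = x^m h(x + x^-1). Every root of h in the
   splitting field L1 of M_t has the form a + a^-1 with a a root of M_t, and
   conversely; hence h splits in L1, a splitting field L2 of h embeds into L1,
   and its image E is generated by the a + a^-1. Pulling automorphisms of L1
   back along this embedding is a surjection Gal(L1) -> Gal(L2), and its kernel
   Gal(L1 / E) consists of the automorphisms fixing every a + a^-1, i.e. sending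
   every root a to a or a^-1: this is the pair kernel N. *)

From HB Require Import structures.
From mathcomp Require Import all_boot all_order all_algebra all_fingroup all_field.
From mathcomp Require Import zify ring.
Import GRing.Theory.
Local Open Scope ring_scope.

Lemma root_dvdp_prod_XsubC {R : idomainType} {q : {poly R}} {rs : seq R} :
    (1 < size q)%N -> q %| \prod_(z <- rs) ('X - z%:P) ->
  exists2 z, z \in rs & root q z.
Proof.
move=> sq /dvdp_prod_XsubC[m Dq].
case Em: (mask m rs) Dq => [|z zs] Dq.
  by move: sq; rewrite (eqp_size Dq) big_nil size_poly1.
exists z; first by apply: (mem_mask (m := m)); rewrite Em mem_head.
by rewrite (eqp_root Dq) root_prod_XsubC mem_head.
Qed.

Section SelfReciprocal.
Context {R : fieldType}.
Implicit Types (h : {poly R}) (x : R).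

(* [srpoly n h] is x^n h(x + x^-1) whenever size h <= n.+1. *)
Definition srpoly n h : {poly R} :=
  \sum_(i < n.+1) h`_i *: ('X^(n - i) * ('X^2 + 1) ^+ i).

Lemma srpolyD n h1 h2 : srpoly n (h1 + h2) = srpoly n h1 + srpoly n h2.
Proof.
by rewrite /srpoly -big_split; apply: eq_bigr => i _; rewrite coefD scalerDl.
Qed.

Lemma srpolyZ n c h : srpoly n (c *: h) = c *: srpoly n h.
Proof.
by rewrite /srpoly scaler_sumr; apply: eq_bigr => i _; rewrite coefZ scalerA.
Qed.

Lemma srpolyC n c : srpoly n c%:P = c *: 'X^n.
Proof.
rewrite /srpoly big_ord_recl big1 => [|i _]; last by rewrite coefC scale0r.
by rewrite coefC /= subn0 mulr1 addr0.
Qed.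

Lemma srpolyMX n h : srpoly n.+1 (h * 'X) = ('X^2 + 1) * srpoly n h.
Proof.
rewrite /srpoly big_ord_recl coefMX scale0r add0r mulr_sumr.
apply: eq_bigr => i _; rewrite coefMX /= /bump /= add1n subSS exprS.
by rewrite -!scalerAr mulrCA.
Qed.

Lemma srpolyS n h : (size h <= n.+1)%N -> srpoly n.+1 h = 'X * srpoly n h.
Proof.
move=> sh; rewrite /srpoly big_ord_recr /= nth_default // scale0r addr0.
rewrite mulr_sumr; apply: eq_bigr => i _ /=.
by rewrite subSn -1?ltnS // exprS -mulrA scalerAr.
Qed.

Lemma srpoly_mulXsubC n h b : (size h <= n.+1)%N ->
  srpoly n.+1 (h * ('X - b%:P)) = srpoly n h * ('X^2 + 1 - b *: 'X).
Proof.
move=> sh; rewrite mulrBr [h * b%:P]mulrC mul_polyC -scaleNr srpolyD srpolyZ.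
by rewrite srpolyMX srpolyS // mulrBr scaleNr -scalerAr !(mulrC (srpoly n h)).
Qed.

Lemma horner_srpoly n h x : (size h <= n.+1)%N -> x != 0 ->
  (srpoly n h).[x] = x ^+ n * h.[x + x^-1].
Proof.
move=> sh x0; rewrite (horner_coef_wide _ sh) horner_sum mulr_sumr.
apply: eq_bigr => [[i /=]]; rewrite ltnS => le_in _.
rewrite hornerZ hornerM hornerXn horner_exp hornerD hornerXn hornerC.
have -> : x ^+ 2 + 1 = x * (x + x^-1) by rewrite mulrDr mulfV // expr2.
by rewrite exprMn [x ^+ (n - i) * _]mulrA -exprD subnK // mulrCA.
Qed.

Lemma horner0_srpoly n h : (srpoly n h).[0] = h`_n.
Proof.
rewrite horner_sum big_ord_recr /= big1 ?add0r => [|i _].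
  rewrite subnn hornerZ hornerM hornerXn horner_exp hornerD hornerXn hornerC.
  by rewrite !expr0n /= mul1r add0r expr1n mulr1.
by rewrite hornerZ hornerM hornerXn expr0n subn_eq0 leqNgt ltn_ord mul0r mulr0.
Qed.

Lemma coef_srpoly n h : (srpoly n h)`_(n.*2) = h`_n.
Proof.
have monY : ('X^2 + 1 : {poly R}) \is monic by rewrite -polyC1 monicXnaddC.
have sizeY i : size (('X^2 + 1 : {poly R}) ^+ i) = (i.*2).+1.
  rewrite -[size _]prednK ?size_poly_gt0 ?monic_neq0 ?monic_exp //.
  by rewrite size_exp -polyC1 size_XnaddC //= mul2n.
rewrite coef_sum big_ord_recr /= big1 ?add0r => [|i _].
  rewrite subnn mul1r coefZ.
  have /monicP := monic_exp n monY; rewrite lead_coefE sizeY => ->.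
  by rewrite mulr1.
rewrite coefZ coefXnM ifF; last lia.
by rewrite [X in _ * X]nth_default ?mulr0 // sizeY; have := ltn_ord i; lia.
Qed.

Lemma root_srpoly n h x : (size h <= n.+1)%N -> x != 0 ->
  root (srpoly n h) x = root h (x + x^-1).
Proof.
move=> sh x0; rewrite /root horner_srpoly // mulf_eq0 expf_eq0.
by rewrite (negbTE x0) andbF.
Qed.

Lemma srpoly_root_neq0 {n h x} : size h = n.+1 -> root (srpoly n h) x -> x != 0.
Proof.
move=> sh; apply: contraTneq => ->; rewrite /root horner0_srpoly.
by rewrite -[n]/(n.+1.-1) -sh -lead_coefE lead_coef_eq0 -size_poly_eq0 sh.
Qed.

Lemma split_srpoly {rs : seq R} {n h} : size h = n.+1 ->
    srpoly n h %| \prod_(z <- rs) ('X - z%:P) ->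
  exists2 ys, h %= \prod_(y <- ys) ('X - y%:P)
            & {subset ys <= [seq z + z^-1 | z <- rs]}.
Proof.
elim: n h => [|n IHn] h sh dvd.
  by exists [::]; rewrite // big_nil -size_poly_eq1 sh.
have hn0 : h`_n.+1 != 0.
  by rewrite -[n.+1]/(n.+2.-1) -sh -lead_coefE lead_coef_eq0 -size_poly_eq0 sh.
have [z rs_z rz] : exists2 z, z \in rs & root (srpoly n.+1 h) z.
  apply: root_dvdp_prod_XsubC dvd; rewrite ltnNge; apply: contra hn0 => s_le1.
  by rewrite -coef_srpoly nth_default // (leq_trans s_le1).
have z0 := srpoly_root_neq0 sh rz.
have [h' Dh] : exists h', h = h' * ('X - (z + z^-1)%:P).
  by apply/factor_theorem; rewrite -(root_srpoly n.+1) ?sh.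
have sh' : size h' = n.+1.
  have h'0 : h' != 0.
    by apply: contra_eq_neq sh => h'_0; rewrite Dh h'_0 mul0r size_poly0.
  by move: sh; rewrite Dh size_Mmonic ?monicXsubC // size_XsubC addn2 => -[].
have [|ys Dys sub_ys] := IHn h' sh'.
  by apply: dvdp_trans dvd; rewrite Dh srpoly_mulXsubC ?sh' // dvdp_mulr.
exists (z + z^-1 :: ys); first by rewrite big_cons Dh mulrC eqp_mull.
by move=> y /predU1P[-> | /sub_ys //]; apply: map_f.
Qed.

Lemma root_srpoly_pairs {rs : seq R} {n h} y : size h = n.+1 ->
    srpoly n h %= \prod_(z <- rs) ('X - z%:P) ->
  root h y = (y \in [seq z + z^-1 | z <- rs]).
Proof.
move=> sh Dh; have dvd : srpoly n h %| \prod_(z <- rs) ('X - z%:P).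
  by rewrite (eqp_dvdl _ Dh).
have [ys Dys ys_pairs] := split_srpoly sh dvd.
apply/idP/mapP => [|[z rs_z ->]].
  by rewrite (eqp_root Dys) root_prod_XsubC => /ys_pairs/mapP.
have rz : root (srpoly n h) z by rewrite (eqp_root Dh) root_prod_XsubC.
by rewrite -(root_srpoly n) ?sh ?(srpoly_root_neq0 sh rz).
Qed.

End SelfReciprocal.

Lemma map_srpoly (R R' : fieldType) (g : {rmorphism R -> R'}) n (h : {poly R}) :
  map_poly g (srpoly n h) = srpoly n (map_poly g h).
Proof.
rewrite /srpoly rmorph_sum; apply: eq_bigr => i _.
have gX : map_poly g 'X = 'X by rewrite map_polyX.
rewrite /= map_polyZ !rmorphM !rmorphXn rmorphD rmorph1 rmorphXn.
by rewrite [_ (polyX R)]gX coef_map.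
Qed.

Lemma eq_add_inv (R : fieldType) (a c : R) : a != 0 -> c != 0 ->
  (c + c^-1 == a + a^-1) = (c == a) || (c == a^-1).
Proof.
move=> a0 c0; have := mulf_eq0 c (c + c^-1 - (a + a^-1)).
have -> : c * (c + c^-1 - (a + a^-1)) = (c - a) * (c - a^-1).
  by rewrite !mulrBr !mulrBl !mulrDr !mulfV //; ring.
by rewrite mulf_eq0 !subr_eq0 (negbTE c0) => ->.
Qed.

(* Extension of algebra morphisms between two different fields; galois.v only
   provides this ([kHomExtend]) for endomorphisms of a single field. *)
Section AHomExtend.
Variables (K : fieldType) (A B : fieldExtType K).

Section AHomRMorphism.
Variables (E : {subfield A}) (f : 'Hom(A, B)).
Hypothesis homEf : ahom_in E f.
Let fE : subvs_of E -> B := f \o vsval.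

Fact ahom_is_zmod_morphism : zmod_morphism fE.
Proof. by move=> a b; rewrite /fE /= !raddfB. Qed.

Fact ahom_is_monoid_morphism : monoid_morphism fE.
Proof.
have [fM f1] := ahom_inP homEf.
by split=> [|a b]; rewrite /fE /= ?algid1 // fM ?subvsP.
Qed.

HB.instance Definition _ :=
  @GRing.isZmodMorphism.Build _ _ fE ahom_is_zmod_morphism.
HB.instance Definition _ :=
  @GRing.isMonoidMorphism.Build _ _ fE ahom_is_monoid_morphism.

Definition ahom_rmorphism := Eval hnf in (fE : {rmorphism _ -> _}).

End AHomRMorphism.

Arguments ahom_rmorphism {E f} homEf.

Section AHomExtendDef.
Variables (E : {subfield A}) (f : 'Hom(A, B)) (x : A) (y : B).
Let fxy z := (map_poly f (Fadjoin_poly E x z)).[y].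

Fact ahomExtend_zmod_morphism_subproof : zmod_morphism fxy.
Proof. by move=> a b; rewrite /fxy 2!raddfB hornerD hornerN. Qed.

Fact ahomExtend_scalable_subproof : scalable fxy.
Proof.
move=> k a; rewrite /fxy linearZ /= -[RHS]mulr_algl -hornerZ; congr _.[_].
by apply/polyP => i; rewrite !(coefZ, coef_map) /= !mulr_algl linearZ.
Qed.

HB.instance Definition _ :=
  @GRing.isZmodMorphism.Build _ _ fxy ahomExtend_zmod_morphism_subproof.
HB.instance Definition _ :=
  @GRing.isScalable.Build _ _ _ _ fxy ahomExtend_scalable_subproof.
Let ahomExtendLinear := Eval hnf in (fxy : {linear _ -> _}).
Definition ahomExtend : 'Hom(A, B) := linfun ahomExtendLinear.

Lemma ahomExtendE z : ahomExtend z = (map_poly f (Fadjoin_poly E x z)).[y].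
Proof. by rewrite lfunE. Qed.

Hypothesis homEf : ahom_in E f.
Hypothesis fPx_y_0 : root (map_poly f (minPoly E x)) y.

Lemma ahomExtend_id z : z \in E -> ahomExtend z = f z.
Proof. by move=> Ez; rewrite ahomExtendE Fadjoin_polyC ?map_polyC ?hornerC. Qed.

Lemma ahomExtend_poly p :
  p \in polyOver E -> ahomExtend p.[x] = (map_poly f p).[y].
Proof.
move=> Ep; rewrite ahomExtendE (Fadjoin_poly_mod x) //.
rewrite (divp_eq (map_poly f p) (map_poly f (minPoly E x))).
rewrite hornerD hornerM (rootP fPx_y_0) mulr0 add0r.
have [p1 ->] := polyOver_subvs Ep.
have [Px1 ->] := polyOver_subvs (minPolyOver E x).
by rewrite -map_modp -!map_poly_comp (map_modp (ahom_rmorphism homEf)).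
Qed.

Lemma ahomExtendP : ahom_in <<E; x>> ahomExtend.
Proof.
have [fM f1] := ahom_inP homEf.
apply/ahom_inP; split; last by rewrite ahomExtend_id ?mem1v.
move=> _ _ /Fadjoin_polyP[p Ep ->] /Fadjoin_polyP[q Eq ->].
rewrite -hornerM !ahomExtend_poly ?rpredM // -hornerM; congr _.[_].
apply/polyP=> i; rewrite coef_map !coefM /= linear_sum /=.
by apply: eq_bigr => j _; rewrite !coef_map /= fM ?(polyOverP _).
Qed.

End AHomExtendDef.

Arguments ahomExtendP {E f x y}.

Definition coord1_hom (a : A) : B := coord [tuple 1] ord0 a *: 1.

Fact coord1_hom_is_linear : linear coord1_hom.
Proof. by move=> k u v; rewrite /coord1_hom linearP scalerDl scalerA. Qed.
HB.instance Definition _ :=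
  GRing.isLinear.Build K A B *:%R coord1_hom coord1_hom_is_linear.

Lemma ahom_in1 : exists f : 'Hom(A, B), ahom_in 1 f.
Proof.
have f_scale1 k : linfun coord1_hom (k *: 1) = k *: 1.
  have free1 : free [tuple 1 : A] by rewrite seq1_free oner_neq0.
  have := coord_free ord0 ord0 free1; rewrite eqxx => /= c1.
  by rewrite lfunE linearZ /= /coord1_hom c1 scale1r.
exists (linfun coord1_hom); apply/ahom_inP; split; last first.
  by rewrite -[1 in LHS]scale1r f_scale1 scale1r.
move=> _ _ /vlineP[a ->] /vlineP[b ->].
by rewrite -scalerAl -scalerAr mul1r scalerA !f_scale1 -scalerAl mul1r scalerA.
Qed.

Section SplittingAHom.
Variables (p : {poly K}) (ys : seq B).
Hypothesis p_splits : map_poly (in_alg B) p %= \prod_(y <- ys) ('X - y%:P).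

Lemma ahom_root_minPoly {E : {subfield A}} {f : 'Hom(A, B)} {z : A} :
    ahom_in E f -> root (map_poly (in_alg A) p) z ->
  exists y, root (map_poly f (minPoly E z)) y.
Proof.
move=> homEf pz; pose fE := ahom_rmorphism homEf.
have pE : map_poly (in_alg A) p \is a polyOver E.
  by apply/polyOverP=> i; rewrite coef_map rpredZ ?rpred1.
have [q Dq] := polyOver_subvs (minPolyOver E z).
have [pA DpA] := polyOver_subvs pE.
have fpA : map_poly fE pA = map_poly (in_alg B) p.
  rewrite map_poly_comp /= -DpA -map_poly_comp; apply: eq_map_poly => c /=.
  by rewrite linearZ /= (ahom_inP homEf).2.
have fqE : map_poly f (minPoly E z) = map_poly fE q.
  by rewrite Dq -map_poly_comp.
have fq_gt1 : (1 < size (map_poly fE q))%N.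
  rewrite size_map_poly -(size_map_poly vsval) -Dq.
  by apply: root_size_gt1 (root_minPoly _ _); rewrite monic_neq0 ?monic_minPoly.
have fq_dvd : map_poly fE q %| \prod_(y <- ys) ('X - y%:P).
  rewrite -(eqp_dvdr _ p_splits) -fpA dvdp_map -(dvdp_map vsval) -Dq -DpA.
  exact: minPoly_dvdp.
have [y _ ry] := root_dvdp_prod_XsubC fq_gt1 fq_dvd.
by exists y; rewrite fqE.
Qed.

Lemma ahom_in_adjoin_seq (E : {subfield A}) (f : 'Hom(A, B)) rs :
    ahom_in E f -> all (root (map_poly (in_alg A) p)) rs ->
  exists g : 'Hom(A, B), ahom_in <<E & rs>> g.
Proof.
elim: rs => [|z rs IHrs] /= in E f *; first by exists f; rewrite Fadjoin_nil.
move=> homEf /andP[pz prs]; have [y fEz_y] := ahom_root_minPoly homEf pz.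
have [g homg] := IHrs _ _ (ahomExtendP homEf fEz_y) prs.
by exists g; rewrite adjoin_cons.
Qed.

Lemma splitting_ahom : splittingFieldFor 1 (map_poly (in_alg A) p) fullv ->
  exists f : 'Hom(A, B), ahom_in fullv f.
Proof.
case=> rs Dp <-; have [f1 hom1] := ahom_in1.
apply: ahom_in_adjoin_seq hom1 _; apply/allP=> z rs_z.
by rewrite (eqp_root Dp) root_prod_XsubC.
Qed.

End SplittingAHom.
End AHomExtend.

Arguments splitting_ahom {K A B p ys}.

Lemma mem_gal1 (K : fieldType) (L : splittingFieldType K) (E : {subfield L})
  (s : gal_of E) : s \in 'Gal(E / 1%AS)%g.
Proof. by rewrite gal_kHom ?sub1v // k1AHom. Qed.

Section GalPullback.
Variables (K : fieldType) (L1 L2 : splittingFieldType K) (phi : 'AHom(L2, L1)).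
Hypothesis normal_limg : normalField 1 (limg phi).

Let phiK : cancel phi phi^-1%VF := lker0_lfunK (AHom_lker0 phi).

Lemma gal_limg (s : gal_of {:L1}) a : s (phi a) \in limg phi.
Proof.
have <- : (gal_repr s @: limg phi)%VS = limg phi.
  by apply/eqP/(forall_inP normal_limg); rewrite inE kAutfE k1AHom.
by rewrite !memv_img ?memvf.
Qed.

Lemma pullback_ahom (s : gal_of {:L1}) :
  ahom_in fullv (phi^-1 \o gal_repr s \o phi)%VF.
Proof.
apply/ahom_inP; split=> [a b _ _|]; rewrite !comp_lfunE.
  have [a' _ Da] := memv_imgP (gal_limg s a).
  have [b' _ Db] := memv_imgP (gal_limg s b).
  by rewrite !rmorphM /= Da Db -rmorphM !phiK.
by rewrite !rmorph1 -(rmorph1 phi) phiK.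
Qed.

Definition gal_pullback (s : gal_of {:L1}) : gal_of {:L2} :=
  gal {:L2} (AHom (pullback_ahom s)).

Lemma gal_pullbackE s a : phi (gal_pullback s a) = s (phi a).
Proof.
rewrite /gal_pullback galK ?subvf ?memvf //= !comp_lfunE.
by rewrite limg_lfunVK ?gal_limg.
Qed.

Lemma gal_pullbackM :
  {in 'Gal({:L1} / 1%AS)%g &, {morph gal_pullback : s t / (s * t)%g}}.
Proof.
move=> s t _ _; apply/eqP/gal_eqP => a _; apply: (can_inj phiK).
by rewrite gal_pullbackE !galM ?memvf // !gal_pullbackE.
Qed.
Canonical gal_pullback_morphism := Morphism gal_pullbackM.

Lemma ker_gal_pullback : ('ker gal_pullback = 'Gal({:L1} / limg phi))%g.
Proof.
apply/setP => s; rewrite gal_kHom ?subvf //.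
apply/idP/kAHomP => [ker_s _ /memv_imgP[a _ ->] | fix_s].
  by rewrite -gal_pullbackE (mker ker_s) gal_id.
apply/kerP; first exact: mem_gal1.
apply/eqP/gal_eqP => a _; apply: (can_inj phiK) => /=.
by rewrite gal_pullbackE gal_id fix_s ?memv_img ?memvf.
Qed.

Lemma im_gal_pullback :
  (gal_pullback @* 'Gal({:L1} / 1%AS) = 'Gal({:L2} / 1%AS))%g.
Proof.
apply/eqP; rewrite eqEsubset; apply/andP; split; apply/subsetP => tau _.
  exact: mem_gal1.
have hom_tau : kHom 1 (limg phi) (phi \o gal_repr tau \o phi^-1)%VF.
  apply/kHomP_tmp; split=> [_ /vlineP[k ->] | u v].
    by rewrite !comp_lfunE !linearZ /= -(rmorph1 phi) phiK !rmorph1.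
  move=> /memv_imgP[a _ ->] /memv_imgP[b _ ->].
  by rewrite !comp_lfunE -(rmorphM phi) !phiK !rmorphM.
have sub_limg : (1 <= limg phi <= fullv)%VS by rewrite sub1v subvf.
have [s _ Ds] := kHom_to_gal sub_limg (normalFieldf 1) hom_tau.
apply/morphimP; exists s; rewrite ?mem_gal1 //.
apply/eqP/gal_eqP => a _; apply: (can_inj phiK) => /=.
by rewrite gal_pullbackE -Ds ?memv_img ?memvf // !comp_lfunE phiK.
Qed.

Lemma gal_quotient_limg_isog :
  ('Gal({:L1} / 1%AS) / 'Gal({:L1} / limg phi) \isog 'Gal({:L2} / 1%AS))%g.
Proof. by rewrite -ker_gal_pullback -im_gal_pullback first_isog. Qed.

End GalPullback.

Lemma eq_adjoin_seq (K : fieldType) (aT : falgType K) (U : {vspace aT})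
    (xs ys : seq aT) :
  xs =i ys -> <<U & xs>>%VS = <<U & ys>>%VS.
Proof.
move=> eq_xy; apply/eqP.
by rewrite eqEsubv !adjoin_seqSr // => x; rewrite eq_xy.
Qed.

Lemma pair_kernel_gal (K : fieldType) (L : splittingFieldType K) (rs : seq L) :
    0 \notin rs ->
  pair_kernel rs = 'Gal({:L} / <<1 & [seq z + z^-1 | z <- rs]>>)%g.
Proof.
move=> rs0; set pairs := [seq z + z^-1 | z <- rs].
apply/setP => s; rewrite inE mem_gal1 gal_kHom ?subvf //=.
have nz z : z \in rs -> z != 0 by apply: contraTneq => ->.
apply/allP/kAHomP => [pair_s | fix_s z rs_z].
  have : (<<1 & pairs>> <= fixedField [set s])%VS.
    apply/Fadjoin_seqP; split=> [|_ /mapP[z rs_z ->]]; first exact: sub1v.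
    apply/fixedFieldP=> [|_ /set1P->]; first exact: memvf.
    apply/eqP; rewrite rmorphD fmorphV eq_add_inv ?fmorph_eq0 ?nz //.
    exact: pair_s.
  by move/subvP=> sub_fix x /sub_fix /mem_fixedFieldP[_]; apply; apply: set11.
have /eqP := fix_s _ (seqv_sub_adjoin _ (map_f _ rs_z)).
by rewrite rmorphD fmorphV eq_add_inv ?fmorph_eq0 ?nz.
Qed.

Theorem gal_pair_kernel_isog {K : fieldType} (h : {poly K}) n
    {L1 L2 : splittingFieldType K} {rs : seq L1} :
    size h = n.+1 ->
    map_poly (in_alg L1) (srpoly n h) %= \prod_(z <- rs) ('X - z%:P) ->
    splittingFieldFor 1 (map_poly (in_alg L2) h) fullv ->
  ('Gal({:L1} / 1%AS) / pair_kernel rs \isog 'Gal({:L2} / 1%AS))%g.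
Proof.
move=> sh Drs splitL2; have [ys2 Dys2 genL2] := splitL2.
set h1 := map_poly (in_alg L1) h; set pairs := [seq z + z^-1 | z <- rs].
have sh1 : size h1 = n.+1 by rewrite size_map_poly.
rewrite map_srpoly -/h1 in Drs.
have dvd : srpoly n h1 %| \prod_(z <- rs) ('X - z%:P).
  by rewrite (eqp_dvdl _ Drs).
have [ys1 Dys1 _] := split_srpoly sh1 dvd.
have rs0 : 0 \notin rs.
  apply/negP; rewrite -root_prod_XsubC -(eqp_root Drs).
  by move=> /(srpoly_root_neq0 sh1); rewrite eqxx.
have [f homf] := splitting_ahom Dys1 splitL2.
pose phi : 'AHom(L2, L1) := AHom homf.
have limg_phi : limg phi = <<1 & map phi ys2>>%VS.
  by rewrite -genL2 aimg_adjoin_seq aimg1.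
have Dh1 : h1 %= \prod_(u <- map phi ys2) ('X - u%:P).
  have phi_h : map_poly phi (map_poly (in_alg L2) h) = h1.
    rewrite -map_poly_comp; apply: eq_map_poly => c /=.
    by rewrite linearZ /= (ahom_inP homf).2.
  have := Dys2; rewrite -(eqp_map phi) phi_h rmorph_prod /= big_map.
  by under eq_bigr do rewrite (map_polyXsubC phi).
have normal_limg : normalField 1 (limg phi).
  apply/splitting_normalField; first exact: sub1v.
  by exists h1; [apply/polyOver1P; exists h | exists (map phi ys2)].
have limg_pairs : limg phi = <<1 & pairs>>%VS.
  rewrite limg_phi; apply: eq_adjoin_seq => u.
  by rewrite -(root_srpoly_pairs _ sh1 Drs) (eqp_root Dh1) root_prod_XsubC.
by rewrite pair_kernel_gal // -limg_pairs; apply: gal_quotient_limg_isog.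
Qed.

Section RationalFunctionField.
Variable F : fieldType.

HB.instance Definition _ :=
  GRing.RMorphism.copy (@cst F) (@tofrac {poly F} \o polyC).

Lemma Mpoly_srpoly (f : {poly F}) : f != 0 -> Mpoly f = srpoly (size f).-1 f.
Proof. by move=> f0; rewrite /Mpoly /srpoly prednK // size_poly_gt0. Qed.

Lemma Mtpoly_srpoly (f : {poly F}) :
  f != 0 -> Mtpoly f = srpoly (size f).-1 (fplust f).
Proof.
move=> f0; rewrite /Mtpoly /fplust Mpoly_srpoly //.
by rewrite map_srpoly srpolyD srpolyC.
Qed.

Lemma size_fplust (f : {poly F}) : f \is monic -> size (fplust f) = size f.
Proof.
move=> mon_f; have [sf_le1 | sf_gt1] := leqP (size f) 1; last first.
  rewrite /fplust size_polyDl size_map_poly //.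
  by apply: leq_ltn_trans sf_gt1; apply: size_polyC_leq1.
have f1 : f = 1.
  by move: mon_f; rewrite (size1_polyC sf_le1) monicE lead_coefC => /eqP->.
rewrite f1 /fplust map_polyC -polyCD !size_polyC oner_neq0 /= rmorph1.
rewrite /tvar -(rmorph1 (@tofrac {poly F})) -rmorphD tofrac_eq0.
by rewrite -size_poly_eq0 addrC -polyC1 size_XaddC.
Qed.

End RationalFunctionField.

Theorem lemma5p4 (F : finFieldType) (f : {poly F})
  (hmonic : f \is monic)
  (gs : seq {poly F})
  (hgs_uniq : uniq gs)
  (hgs_monic : all (fun g => g \is monic) gs)
  (hgs_irr : forall g, g \in gs -> irreducible_poly g)
  (hgs_ne : forall g, g \in gs -> (g != 'X - 1) && (g != 'X + 1))
  (hM : Mpoly f = ('X - 1) ^+ 2 * \prod_(g <- gs) g)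
  (L1 : splittingFieldType (ratfun F)) (rs : seq L1)
  (hrs : map_poly (in_alg L1) (Mtpoly f) %= \prod_(z <- rs) ('X - z%:P))
  (hL1 : <<1%VS & rs>>%VS = fullv)
  (L2 : splittingFieldType (ratfun F))
  (hL2 : splittingFieldFor 1%VS (map_poly (in_alg L2) (fplust f)) fullv) :
  (('Gal({:L1} / 1%AS) / pair_kernel rs)%g \isog 'Gal({:L2} / 1%AS)%g)
  /\ (forall H0 : {group gal_of {:L1}},
        H0 \subset 'Gal({:L1} / 1%AS)%g ->
        H0 \isog ('Gal({:L1} / 1%AS) / pair_kernel rs)%g ->
        (H0 :&: pair_kernel rs = 1)%g ->
        H0 \isog 'Gal({:L2} / 1%AS)%g).
Proof.
have f0 := monic_neq0 hmonic.
have iso : ('Gal({:L1} / 1%AS) / pair_kernel rs \isog 'Gal({:L2} / 1%AS))%g.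
  apply: (gal_pair_kernel_isog (fplust f) (size f).-1 _ _ hL2).
    by rewrite size_fplust // prednK // size_poly_gt0.
  by rewrite -Mtpoly_srpoly.
by split=> // H0 _ H0_iso _; apply: isog_trans H0_iso iso.
Qed.
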